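(* Consider the recursive network formation model with the utility function described in the context, with $\gamma=0$ and no upper bound on the number of nodes. If $$b_1-b_3\le c<b_1 \quad\text{and}\quad b_2-b_3<c_0<b_2-b_4,$$ then the resulting topology is a 2-star. That is, starting from a single node, for every $n$ the pairwise stable network reached after the $n$-th node has entered is: - for $n\le3$: a path on $n$ nodes; - for $n\ge4$: a 2-star on $n$ nodes, irrespective of the random order in which nodes are selected to move.
   Context: A 2-star on $n\ge4$ nodes consists of two adjacent ''center'' nodes. Every other node is a leaf adjacent to exactly one center and to nothing else. Each center has at least one leaf, and the numbers of leaves of the two centers differ by at most one. Networks are finite simple undirected graphs whose vertices (nodes) are self-interested agents. Parameters: benefits $b_1>b_2>b_3>b_4>\dots>0$, where $b_i$ is the benefit a node obtains from a node at distance $i$; a link cost $c$ per immediate neighbor; an intermediation fraction $\gamma$ with $0\le\gamma<1$; and a network entry factor $c_0$. Notation: $N$ is the set of nodes currently in the network, $d_j$ the degree of $j$, and $l(j,w)$ the graph distance. A node $x$ is essential for a pair $y,z$ (with $x\notin\{y,z\}$) if $x$ lies on every path joining $y$ and $z$. Write $E(y,z)$ for the set of nodes essential for $y,z$ and $e(y,z)=|E(y,z)|$. Only pairs joined by a path contribute to the sums below. Utility of node $j$ in network $g$: $$u_j(g)=-c_0\,d_{T(j)}\mathbf 1_{\{j=\mathrm{NE}\}}+d_j(b_1-c)+\sum_{w\in N,\ l(j,w)>1}b_{l(j,w)}-\sum_{w\in N,\ E(j,w)\ne\emptyset}\gamma\, b_{l(j,w)}+\sum_{y,z\in N,\ j\in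 E(y,z)}\frac{\gamma}{e(y,z)}\,2\,b_{l(y,z)}.$$ Here $\mathbf 1_{\{j=\mathrm{NE}\}}=1$ exactly when $j$ is a newly entering node evaluating the creation of its first link. $T(j)$ is the existing node to which $j$ forms that first link, and $d_{T(j)}$ is that node's degree before the link. The network before entry gives the entering node utility $0$. Pairwise stability: $g$ is pairwise stable if (a) for every link $(i,j)\in g$, $u_i(g\setminus\{(i,j)\})\le u_i(g)$ and $u_j(g\setminus\{(i,j)\})\le u_j(g)$; and (b) for every non-link $(i,j)\notin g$, if $u_i(g\cup\{(i,j)\})>u_i(g)$ then $u_j(g\cup\{(i,j)\})<u_j(g)$. Recursive model of network formation: - The process starts with a single node. - When the current network of $n-1$ nodes is pairwise stable, a new node considers entering. Its options are to stay out or to propose a link to one existing node. The link forms iff the receiving node's utility does not decrease. No existing node can link to the newcomer before it has formed this first link. - After entry, nodes are repeatedly chosen at random to move. A chosen node plays a myopic best response among three options: create a link with a non-neighbor (the link forms only if the other node's utility does not decrease, which the proposer anticipates); delete a link with a neighbor (unilaterally); or keep the status quo. It alters a link only if this strictly increases its current utility. - This continues until the network is pairwise stable; then the next node considers entering, and so on. ''The resulting topology is X'' means: for every number $n$ of nodes, every pairwise stable network reached after the $n$-th node has entered is a network of topology X on $n$ nodes, irrespective of the random choices. *)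

From HB Require Import structures.
From mathcomp Require Import all_boot all_order all_algebra.
Set Implicit Arguments. Unset Strict Implicit. Unset Printing Implicit Defensive.
Import Order.TTheory GRing.Theory Num.Theory.
Local Open Scope ring_scope.

(* A network with n nodes has node set N = {0,...,n-1}; the k-th entering
   node (k = 1, 2, ...) is labelled k-1.  A network is an adjacency relation
   (only its restriction to N matters). *)
Definition graph := nat -> nat -> bool.

Definition nodes (n : nat) : seq nat := iota 0 n.

Fixpoint walk (g : graph) (n : nat) (P : pred nat) (k : nat) (i j : nat) : bool :=
  match k with
  | 0 => [&& i == j, (i < n)%N & P i]
  | k'.+1 => has (fun m => [&& walk g n P k' i m, g m j, (j < n)%N & P j]) (nodes n)
  end.

Definition conn (g : graph) (n i j : nat) : bool :=
  has (fun k => walk g n predT k i j) (nodes n).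

(* graph distance l(i,j) (meaningful when conn g n i j) *)
Definition dist (g : graph) (n i j : nat) : nat :=
  find (fun k => walk g n predT k i j) (nodes n).

Definition essential (g : graph) (n x y z : nat) : bool :=
  [&& x != y, x != z, (x < n)%N &
      ~~ has (fun k => walk g n (fun v => v != x) k y z) (nodes n)].

Definition ess (g : graph) (n y z : nat) : seq nat :=
  [seq x <- nodes n | essential g n x y z].

Definition deg (g : graph) (n j : nat) : nat := count (g j) (nodes n).

Definition add_link (g : graph) (i j : nat) : graph :=
  fun x y => [|| g x y, (x == i) && (y == j) | (x == j) && (y == i)].

Definition del_link (g : graph) (i j : nat) : graph :=
  fun x y => g x y && ~~ (((x == i) && (y == j)) || ((x == j) && (y == i))).

Section Model.
Variables (R : realFieldType) (b : nat -> R) (c gam c0 : R).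

(* utility of node j in network g on N = [0,n), without the entry term
   (i.e. for nodes that are not a newcomer evaluating its first link) *)
Definition util (g : graph) (n j : nat) : R :=
  (deg g n j)%:R * (b 1%N - c)
  + \sum_(w <- nodes n | conn g n j w && (1 < dist g n j w)%N) b (dist g n j w)
  - \sum_(w <- nodes n | conn g n j w && (ess g n j w != [::])) gam * b (dist g n j w)
  + \sum_(y <- nodes n) \sum_(z <- nodes n | [&& (y < z)%N, conn g n y z & j \in ess g n y z])
      gam / (size (ess g n y z))%:R * 2 * b (dist g n y z).

Definition entry_util (g : graph) (n T : nat) : R :=
  util (add_link g n T) n.+1 n - c0 * (deg g n T)%:R.

Definition accepts (g : graph) (n T : nat) : Prop :=
  util g n T <= util (add_link g n T) n.+1 T.

Definition pstable (g : graph) (n : nat) : Prop :=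
  (forall i j, (i < n)%N -> (j < n)%N -> g i j ->
     util (del_link g i j) n i <= util g n i /\ util (del_link g i j) n j <= util g n j)
  /\ (forall i j, (i < n)%N -> (j < n)%N -> i != j -> ~~ g i j ->
     util g n i < util (add_link g i j) n i -> util (add_link g i j) n j < util g n j).

Definition feasible_move (g : graph) (n i : nat) (g' : graph) : Prop :=
  (exists j, [/\ (j < n)%N, j != i, g i j & g' = del_link g i j]) \/
  (exists j, [/\ (j < n)%N, j != i, ~~ g i j, util g n j <= util (add_link g i j) n j
                & g' = add_link g i j]).

Definition br_step (g : graph) (n : nat) (g' : graph) : Prop :=
  exists i, [/\ (i < n)%N, feasible_move g n i g', util g n i < util g' n i &
    forall g'', feasible_move g n i g'' -> util g'' n i <= util g' n i].

Inductive reached : nat -> graph -> Prop :=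
| reached_init : reached 1 (fun _ _ => false)
| reached_entry n g T :
    reached n g -> pstable g n -> (T < n)%N -> accepts g n T ->
    0 < entry_util g n T ->
    (forall T', (T' < n)%N -> accepts g n T' -> entry_util g n T' <= entry_util g n T) ->
    reached n.+1 (add_link g n T)
| reached_move n g g' :
    reached n g -> ~ pstable g n -> br_step g n g' -> reached n g'.

End Model.

Definition is_path (g : graph) (n : nat) : Prop :=
  exists p : seq nat, perm_eq p (nodes n) /\
    forall x y, (x < n)%N -> (y < n)%N ->
      g x y = has (fun k => ((nth 0%N p k == x) && (nth 0%N p k.+1 == y))
                            || ((nth 0%N p k == y) && (nth 0%N p k.+1 == x)))
                  (iota 0 (size p).-1).

Definition is_2star (g : graph) (n : nat) : Prop :=
  (4 <= n)%N /\
  exists x y, [/\ (x < n)%N, (y < n)%N, x != y, g x y &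
    [/\ forall v, (v < n)%N -> v != x -> v != y ->
          (g v x (+) g v y) /\
          (forall w, (w < n)%N -> w != x -> w != y -> ~~ g v w),
        (1 <= count (fun v => [&& v != x, v != y & g x v]) (nodes n))%N,
        (1 <= count (fun v => [&& v != x, v != y & g y v]) (nodes n))%N,
        (count (fun v => [&& v != x, v != y & g x v]) (nodes n)
           <= (count (fun v => [&& v != x, v != y & g y v]) (nodes n)).+1)%N &
        (count (fun v => [&& v != x, v != y & g y v]) (nodes n)
           <= (count (fun v => [&& v != x, v != y & g x v]) (nodes n)).+1)%N]].

(* Every network reached is either the initial single node or a
   balanced double star: two adjacent centres, each with its own leaves, the
   two leaf counts differing by at most one.  Double stars are pairwise
   stable, hence once a newcomer has linked no node ever moves; and the
   newcomer's best accepted link (to the centre with fewer leaves, or to a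
   leaf of the 3-node path) yields again a balanced double star. *)

From HB Require Import structures.
From mathcomp Require Import all_boot all_order all_algebra.
From mathcomp Require Import ring lra zify.
From Stdlib Require Import FunctionalExtensionality.
Set Implicit Arguments. Unset Strict Implicit. Unset Printing Implicit Defensive.
Import Order.TTheory GRing.Theory Num.Theory.
Local Open Scope ring_scope.

Lemma mem_nodes v n : (v \in nodes n) = (v < n)%N.
Proof. by rewrite /nodes mem_iota. Qed.

Lemma find_iota0 (p : pred nat) N m : (m < N)%N -> p m ->
  (forall k, (k < m)%N -> ~~ p k) -> find p (iota 0 N) = m.
Proof.
move=> hm pm hb; rewrite -(subnKC (ltnW hm)) iotaD add0n find_cat size_iota.
have -> : has p (iota 0 m) = false.
  by apply/negbTE/hasPn => k; rewrite mem_iota => /andP[_ /hb].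
by case E: (N - m)%N => [|r]; [lia | rewrite /= pm addn0].
Qed.

(* Labels are [Some k] (distance k) or [None] (unreachable); an edge may
   raise the label by at most one. *)
Definition within_one (lu lv : option nat) : bool :=
  if lu is Some k then (if lv is Some k' then (k' <= k.+1)%N else false) else true.

Record bfs_labelling (g : graph) (N j : nat) (d : nat -> option nat) : Prop := {
  bfs_root : d j = Some 0%N;
  bfs_root_in : (j < N)%N;
  bfs_root_unique : forall w, (w < N)%N -> d w = Some 0%N -> w = j;
  bfs_edge : forall u v, (u < N)%N -> (v < N)%N -> g u v -> within_one (d u) (d v);
  bfs_parent : forall w k, (w < N)%N -> d w = Some k.+1 ->
    exists2 u, (u < N)%N & g u w && (d u == Some k);
  bfs_loopless : ~~ g j j }.

Section BfsLabelling.
Variables (g : graph) (N j : nat) (d : nat -> option nat).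
Hypothesis hd : bfs_labelling g N j d.

Lemma walk_label k w : walk g N predT k j w -> exists2 k', d w = Some k' & (k' <= k)%N.
Proof.
elim: k w => [|k IH] w /=.
  by case/and3P => /eqP <- _ _; exists 0%N; rewrite ?(bfs_root hd).
case/hasP => m; rewrite mem_nodes => hm /and4P[hw hg hwN _].
have [k' hk' lek] := IH m hw.
have := bfs_edge hd hm hwN hg; rewrite hk' /=.
by case: (d w) => // k'' hk''; exists k''; rewrite // (leq_trans hk'').
Qed.

Lemma label_walk k w : (w < N)%N -> d w = Some k -> walk g N predT k j w.
Proof.
elim: k w => [|k IH] w hw hdw /=.
  by rewrite (bfs_root_unique hd hw hdw) eqxx (bfs_root_in hd).
have [u hu /andP[hg /eqP hdu]] := bfs_parent hd hw hdw.
by apply/hasP; exists u; rewrite ?mem_nodes // hg hw IH.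
Qed.

(* Pigeonhole: the labels 0..k of a parent chain are carried by distinct
   nodes of [0,N), so a label is always smaller than N. *)
Lemma label_lt k w : (w < N)%N -> d w = Some k -> (k < N)%N.
Proof.
move=> hw hdw.
have cover : {subset map Some (iota 0 k.+1) <= map d (nodes N)}.
  move=> o /mapP[i]; rewrite mem_iota add0n => /andP[_ hi] ->.
  elim: k w hw hdw hi => [|k IH] w hw hdw hi.
    have -> : i = 0%N by lia.
    by apply/mapP; exists w; rewrite ?mem_nodes.
  case: (ltngtP i k.+1) => [hik||->]; last by apply/mapP; exists w; rewrite ?mem_nodes.
  - have [u hu /andP[_ /eqP hdu]] := bfs_parent hd hw hdw; exact: IH hu hdu hik.
  - lia.
have uniq_labels : uniq (map Some (iota 0 k.+1)).
  by rewrite map_inj_uniq ?iota_uniq //; exact: Some_inj.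
have := uniq_leq_size uniq_labels cover.
by rewrite !size_map size_iota /nodes size_iota.
Qed.

Lemma conn_label w : (w < N)%N -> conn g N j w = (d w != None).
Proof.
move=> hw; apply/hasP/idP => [[k _ /walk_label [k' -> //]]|].
case E: (d w) => [k|] // _; exists k; last exact: label_walk.
by rewrite mem_nodes (label_lt hw E).
Qed.

Lemma dist_label w k : (w < N)%N -> d w = Some k -> dist g N j w = k.
Proof.
move=> hw hdw; apply: find_iota0; first exact: label_lt hdw.
  exact: label_walk.
by move=> i hi; apply/negP => /walk_label [k']; rewrite hdw => -[<-]; rewrite leqNgt hi.
Qed.

Lemma deg_label : deg g N j = count (fun w => d w == Some 1%N) (nodes N).
Proof.
apply: eq_in_count => w; rewrite mem_nodes => hw; apply/idP/eqP => [hg|h1].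
  have := bfs_edge hd (bfs_root_in hd) hw hg; rewrite (bfs_root hd) /=.
  case E: (d w) => [[|[|k]]|] //= _.
  by move: hg; rewrite (bfs_root_unique hd hw E) (negbTE (bfs_loopless hd)).
have [u hu /andP[hg /eqP hdu]] := bfs_parent hd hw h1.
by rewrite -(bfs_root_unique hd hu hdu).
Qed.

End BfsLabelling.

Section UtilityFormula.
Variables (R : realFieldType) (b : nat -> R) (c : R).

(* What the root gains from a node with a given label when [gamma = 0]. *)
Definition gain (l : option nat) : R :=
  match l with Some 1 => b 1%N - c | Some k.+2 => b k.+2 | _ => 0 end.

Lemma util_bfs (g : graph) N j d : bfs_labelling g N j d ->
  util b c 0 g N j = \sum_(w <- nodes N) gain (d w).
Proof.
move=> hd; rewrite /util.
rewrite [X in _ + X]big1 => [|y _]; last by rewrite big1 // => z _; rewrite !mul0r.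
rewrite [X in _ - X]big1 => [|w _]; last by rewrite mul0r.
rewrite subr0 addr0 (deg_label hd) -sum1_count natr_sum mulr_suml.
rewrite big_mkcond [X in _ + X]big_mkcond -big_split /=.
apply: eq_big_seq => w; rewrite mem_nodes => hw.
rewrite (conn_label hd hw).
case E: (d w) => [k|] /=; last by rewrite addr0.
by rewrite (dist_label hd hw E); case: k {E} => [|[|k]]; rewrite /= ?mul1r ?addr0 ?add0r.
Qed.

Lemma util_profile (g : graph) N j d (s A B : seq nat) lA lB :
  bfs_labelling g N j d -> perm_eq (s ++ A ++ B) (nodes N) ->
  {in A, forall w, d w = lA} -> {in B, forall w, d w = lB} ->
  util b c 0 g N j
  = \sum_(w <- s) gain (d w) + (size A)%:R * gain lA + (size B)%:R * gain lB.
Proof.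
move=> hd hP hA hB; rewrite (util_bfs hd) -(perm_big _ hP) !big_cat /= addrA.
rewrite [\sum_(w <- A) _](eq_big_seq (fun=> gain lA)) => [|w hw]; last by rewrite hA.
rewrite [\sum_(w <- B) _](eq_big_seq (fun=> gain lB)) => [|w hw]; last by rewrite hB.
by rewrite !big_const_seq !count_predT !iter_addr_0 !mulr_natl.
Qed.

End UtilityFormula.

Lemma deg_profile (g : graph) N j d (s A B : seq nat) lA lB :
  bfs_labelling g N j d -> perm_eq (s ++ A ++ B) (nodes N) ->
  {in A, forall w, d w = lA} -> {in B, forall w, d w = lB} ->
  deg g N j = (count (fun w => d w == Some 1%N) s
               + (lA == Some 1%N) * size A + (lB == Some 1%N) * size B)%N.
Proof.
move=> hd hP hA hB; rewrite (deg_label hd) -(permP hP) !count_cat addnA.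
rewrite [count _ A](eq_in_count (a2 := fun=> lA == Some 1%N)) => [|w hw]; last by rewrite hA.
rewrite [count _ B](eq_in_count (a2 := fun=> lB == Some 1%N)) => [|w hw]; last by rewrite hB.
by case: (lA == _); case: (lB == _); rewrite /= ?count_predT ?count_pred0 ?mul1n ?mul0n.
Qed.

Definition dstar (x y : nat) (A B : seq nat) : graph := fun v w =>
  [|| (v == x) && (w == y), (v == y) && (w == x), (v == x) && (w \in A),
      (w == x) && (v \in A), (v == y) && (w \in B) | (w == y) && (v \in B)].

Lemma dstar_swap x y A B : dstar x y A B = dstar y x B A.
Proof.
apply: functional_extensionality => v; apply: functional_extensionality => w.
by rewrite /dstar; case: (v == x); case: (v == y); case: (w == x); case: (w == y);
  case: (v \in A); case: (v \in B); case: (w \in A); case: (w \in B).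
Qed.

Lemma dstar_eq_mem x y A B A' B' : A =i A' -> B =i B' -> dstar x y A B = dstar x y A' B'.
Proof.
move=> hA hB; apply: functional_extensionality => v; apply: functional_extensionality => w.
by rewrite /dstar hA hB hA hB.
Qed.

Lemma add_link_sym (g : graph) i j : add_link g i j = add_link g j i.
Proof.
apply: functional_extensionality => v; apply: functional_extensionality => w.
by rewrite /add_link; case: (v == i); case: (v == j); case: (w == i); case: (w == j).
Qed.

Lemma del_link_sym (g : graph) i j : del_link g i j = del_link g j i.
Proof.
apply: functional_extensionality => v; apply: functional_extensionality => w.
by rewrite /del_link; case: (v == i); case: (v == j); case: (w == i); case: (w == j);
  rewrite /= ?andbT ?andbF ?orbF.
Qed.

Lemma add_link_centre x y A B v : add_link (dstar x y A B) v y = dstar x y A (v :: B).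
Proof.
apply: functional_extensionality => u; apply: functional_extensionality => w.
rewrite /add_link /dstar !in_cons.
by case: (u == x); case: (u == y); case: (w == x); case: (w == y); case: (u \in A);
  case: (u \in B); case: (w \in A); case: (w \in B); case: (u == v); case: (w == v).
Qed.

Lemma add_link_path3 x y a v : add_link (dstar x y [:: a] [::]) v a = dstar x a [:: y] [:: v].
Proof.
apply: functional_extensionality => u; apply: functional_extensionality => w.
rewrite /add_link /dstar !in_cons !in_nil.
by case: (u == x); case: (u == y); case: (w == x); case: (w == y); case: (u == a);
  case: (w == a); case: (u == v); case: (w == v).
Qed.

(* An enumeration of [0,N) as named nodes followed by two blocks may be
   padded with fresh nodes [N, N+1, ...], so that every enumeration takes the
   shape [x :: y :: a :: e :: A ++ B] used below. *)
Lemma enum_pad (s A B : seq nat) N k : perm_eq (s ++ A ++ B) (nodes N) ->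
  uniq (s ++ iota N k ++ A ++ B) /\ forall v, (v < N)%N -> v \in s ++ iota N k ++ A ++ B.
Proof.
move=> hP; have hl := perm_uniq hP; rewrite iota_uniq in hl.
have ht := iota_uniq N k; have hN : all (leq N) (iota N k).
  by apply/allP => v; rewrite mem_iota => /andP[].
split; last by move=> v; rewrite -mem_nodes -(perm_mem hP) !mem_cat; case/orP=> ->; rewrite ?orbT.
rewrite (perm_uniq (permEl (perm_catCA s (iota N k) (A ++ B)))) cat_uniq ht hl /= andbT.
apply/hasPn => v; rewrite (perm_mem hP) mem_nodes => hv; apply/negP => /(allP hN).
by rewrite leqNgt hv.
Qed.

Lemma distinct_facts (x y a e : nat) (A B : seq nat) :
  uniq (x :: y :: a :: e :: A ++ B) ->
  ((x == y) = false) * ((y == x) = false) * ((x == a) = false) * ((a == x) = false)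
  * ((x == e) = false) * ((e == x) = false) * ((y == a) = false) * ((a == y) = false)
  * ((y == e) = false) * ((e == y) = false) * ((a == e) = false) * ((e == a) = false)
  * ((x \in A) = false) * ((x \in B) = false) * ((y \in A) = false) * ((y \in B) = false)
  * ((a \in A) = false) * ((a \in B) = false) * ((e \in A) = false) * ((e \in B) = false).
Proof.
rewrite /= !inE !mem_cat !negb_or cat_uniq.
case/and5P => /and5P[? ? ? ? ?] /and4P[? ? ? ?] /and3P[? ? ?] /andP[? ?] _.
by repeat split; apply/negbTE; rewrite // eq_sym.
Qed.

Variant node_class (x y a e : nat) (A B : seq nat) (u : nat) :
  bool -> bool -> bool -> bool -> bool -> bool -> Type :=
| ClassX of u = x : node_class x y a e A B u true false false false false false
| ClassY of u = y : node_class x y a e A B u false true false false false false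
| ClassA of u = a : node_class x y a e A B u false false true false false false
| ClassE of u = e : node_class x y a e A B u false false false true false false
| ClassInA of u \in A : node_class x y a e A B u false false false false true false
| ClassInB of u \in B : node_class x y a e A B u false false false false false true.

Lemma node_classP (x y a e : nat) (A B : seq nat) u :
  uniq (x :: y :: a :: e :: A ++ B) -> u \in x :: y :: a :: e :: A ++ B ->
  node_class x y a e A B u (u == x) (u == y) (u == a) (u == e) (u \in A) (u \in B).
Proof.
move=> hU; have F := distinct_facts hU.
have hAB : u \in A -> (u \in B) = false.
  move: hU; rewrite /= cat_uniq => /and5P[_ _ _ _ /and3P[_ /hasPn hn _]] hA.
  by apply/negbTE/negP => /hn; rewrite hA.
rewrite !in_cons mem_cat.
case: (eqVneq u x) => [->|ux] /=; first by rewrite !F; constructor.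
case: (eqVneq u y) => [->|uy] /=; first by rewrite !F; constructor.
case: (eqVneq u a) => [->|ua] /=; first by rewrite !F; constructor.
case: (eqVneq u e) => [->|ue] /=; first by rewrite !F; constructor.
case hA: (u \in A) => /= h; first by rewrite (hAB hA); constructor.
by rewrite h; constructor.
Qed.

Lemma in_blockA (x y a e w : nat) (A B : seq nat) :
  w \in A -> w \in x :: y :: a :: e :: A ++ B.
Proof. by move=> hw; rewrite !in_cons mem_cat hw !orbT. Qed.

Lemma in_blockB (x y a e w : nat) (A B : seq nat) :
  w \in B -> w \in x :: y :: a :: e :: A ++ B.
Proof. by move=> hw; rewrite !in_cons mem_cat hw !orbT. Qed.

(* Routine verification that an explicitly given labelling of a network built
   from a double star is breadth-first: a case analysis on the kinds of the
   nodes involved.  [hU], [hm] enumerate the nodes as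
   [x :: y :: a :: e :: A ++ B] and [hlt] bounds the named ones. *)
Ltac unfold_net := rewrite /= /dstar /add_link /del_link ?in_cons.
Ltac parent_is v hlt F :=
  exists v; [apply: hlt; rewrite !in_cons eqxx ?orbT | by rewrite ?in_cons ?F ?eqxx].
Ltac bfs_check x y a e hU hm hlt :=
  let F := fresh "F" in let E := fresh "E" in
  have F := distinct_facts hU;
  split;
  [ by rewrite /= eqxx
  | by apply: hlt; rewrite !in_cons eqxx ?orbT
  | move=> ? /hm /(node_classP hU); unfold_net; case=> E //=; by [case | rewrite E]
  | move=> ? ? /hm /(node_classP hU) + /hm /(node_classP hU); unfold_net;
    case=> ?; case=> ? //=
  | move=> ? ? /hm /(node_classP hU); unfold_net; case=> ? //= [<-];
    first [parent_is x hlt F | parent_is y hlt F | parent_is a hlt F | parent_is e hlt F]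
  | by unfold_net; rewrite ?F ?eqxx /= ?andbF ].

Ltac block_label hU in_block :=
  let hw := fresh "hw" in
  move=> ? hw; move: (hw); case: (node_classP hU (in_block _ _ _ _ _ _ _ hw)) => //=.

Lemma enum_newcomer (s l : seq nat) N : perm_eq (s ++ l) (nodes N) ->
  perm_eq (s ++ N :: l) (nodes N.+1).
Proof.
move=> hP; rewrite /nodes -addn1 iotaD add0n /= cats1 perm_sym perm_rcons perm_sym.
by rewrite -cat1s perm_catCA perm_cons.
Qed.

Section Utilities.
Variables (R : realFieldType) (b : nat -> R) (c : R).

Lemma util_centre x y A B N : perm_eq (x :: y :: A ++ B) (nodes N) ->
  util b c 0 (dstar x y A B) N x = (1 + size A)%:R * (b 1%N - c) + (size B)%:R * b 2%N
  /\ deg (dstar x y A B) N x = (1 + size A)%N.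
Proof.
move=> hP; move: (enum_pad (s := [:: x; y]) 2 hP) => /= [hU hm].
have hlt v : v \in x :: y :: A ++ B -> (v < N)%N by rewrite (perm_mem hP) mem_nodes.
have F := distinct_facts hU.
pose d w := if w == x then Some 0%N else if w == y then Some 1%N
  else if w \in A then Some 1%N else if w \in B then Some 2%N else None.
have hd : bfs_labelling (dstar x y A B) N x d by rewrite /d; bfs_check x y N N.+1 hU hm hlt.
have dA : {in A, forall w, d w = Some 1%N} by rewrite /d; block_label hU in_blockA.
have dB : {in B, forall w, d w = Some 2%N} by rewrite /d; block_label hU in_blockB.
rewrite (util_profile b c (s := [:: x; y]) hd hP dA dB) (deg_profile (s := [:: x; y]) hd hP dA dB).
by rewrite /d !big_cons big_nil /= !F !eqxx /=; split; [ring | lia].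
Qed.

Lemma util_leaf x y a A B N : perm_eq (x :: y :: a :: A ++ B) (nodes N) ->
  util b c 0 (dstar x y (a :: A) B) N a
  = (b 1%N - c) + (1 + size A)%:R * b 2%N + (size B)%:R * b 3%N
  /\ deg (dstar x y (a :: A) B) N a = 1%N.
Proof.
move=> hP; move: (enum_pad (s := [:: x; y; a]) 1 hP) => /= [hU hm].
have hlt v : v \in x :: y :: a :: A ++ B -> (v < N)%N by rewrite (perm_mem hP) mem_nodes.
have F := distinct_facts hU.
pose d w := if w == a then Some 0%N else if w == x then Some 1%N
  else if w == y then Some 2%N else if w \in A then Some 2%N
  else if w \in B then Some 3%N else None.
have hd : bfs_labelling (dstar x y (a :: A) B) N a d by rewrite /d; bfs_check x y a N hU hm hlt.
have dA : {in A, forall w, d w = Some 2%N} by rewrite /d; block_label hU in_blockA.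
have dB : {in B, forall w, d w = Some 3%N} by rewrite /d; block_label hU in_blockB.
rewrite (util_profile b c (s := [:: x; y; a]) hd hP dA dB).
rewrite (deg_profile (s := [:: x; y; a]) hd hP dA dB).
by rewrite /d !big_cons big_nil /= !F !eqxx /=; split; [rewrite natrD; ring | lia].
Qed.

Lemma util_leaf_link_sibling x y a e A B N :
  perm_eq (x :: y :: a :: e :: A ++ B) (nodes N) ->
  util b c 0 (add_link (dstar x y (a :: e :: A) B) a e) N a
  = 2%:R * (b 1%N - c) + (1 + size A)%:R * b 2%N + (size B)%:R * b 3%N.
Proof.
move=> hP; move: (enum_pad (s := [:: x; y; a; e]) 0 hP) => /= [hU hm].
have hlt v : v \in x :: y :: a :: e :: A ++ B -> (v < N)%N by rewrite (perm_mem hP) mem_nodes.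
have F := distinct_facts hU.
pose d w := if w == a then Some 0%N else if w == x then Some 1%N
  else if w == e then Some 1%N else if w == y then Some 2%N
  else if w \in A then Some 2%N else if w \in B then Some 3%N else None.
have hd : bfs_labelling (add_link (dstar x y (a :: e :: A) B) a e) N a d.
  by rewrite /d; bfs_check x y a e hU hm hlt.
have dA : {in A, forall w, d w = Some 2%N} by rewrite /d; block_label hU in_blockA.
have dB : {in B, forall w, d w = Some 3%N} by rewrite /d; block_label hU in_blockB.
rewrite (util_profile b c (s := [:: x; y; a; e]) hd hP dA dB).
by rewrite /d !big_cons big_nil /= !F !eqxx /= natrD; ring.
Qed.

Lemma util_leaf_link_across x y a e A B N :
  perm_eq (x :: y :: a :: e :: A ++ B) (nodes N) ->
  util b c 0 (add_link (dstar x y (a :: A) (e :: B)) a e) N a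
  = 2%:R * (b 1%N - c) + (1 + size A)%:R * b 2%N + (size B)%:R * b 3%N.
Proof.
move=> hP; move: (enum_pad (s := [:: x; y; a; e]) 0 hP) => /= [hU hm].
have hlt v : v \in x :: y :: a :: e :: A ++ B -> (v < N)%N by rewrite (perm_mem hP) mem_nodes.
have F := distinct_facts hU.
pose d w := if w == a then Some 0%N else if w == x then Some 1%N
  else if w == e then Some 1%N else if w == y then Some 2%N
  else if w \in A then Some 2%N else if w \in B then Some 3%N else None.
have hd : bfs_labelling (add_link (dstar x y (a :: A) (e :: B)) a e) N a d.
  by rewrite /d; bfs_check x y a e hU hm hlt.
have dA : {in A, forall w, d w = Some 2%N} by rewrite /d; block_label hU in_blockA.
have dB : {in B, forall w, d w = Some 3%N} by rewrite /d; block_label hU in_blockB.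
rewrite (util_profile b c (s := [:: x; y; a; e]) hd hP dA dB).
by rewrite /d !big_cons big_nil /= !F !eqxx /= natrD; ring.
Qed.

Lemma util_centre_link_leaf x y a A B N : perm_eq (x :: y :: a :: A ++ B) (nodes N) ->
  util b c 0 (add_link (dstar x y (a :: A) B) a y) N y
  = (2 + size B)%:R * (b 1%N - c) + (size A)%:R * b 2%N.
Proof.
move=> hP; move: (enum_pad (s := [:: x; y; a]) 1 hP) => /= [hU hm].
have hlt v : v \in x :: y :: a :: A ++ B -> (v < N)%N by rewrite (perm_mem hP) mem_nodes.
have F := distinct_facts hU.
pose d w := if w == y then Some 0%N else if w == x then Some 1%N
  else if w == a then Some 1%N else if w \in B then Some 1%N
  else if w \in A then Some 2%N else None.
have hd : bfs_labelling (add_link (dstar x y (a :: A) B) a y) N y d.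
  by rewrite /d; bfs_check x y a N hU hm hlt.
have dA : {in A, forall w, d w = Some 2%N} by rewrite /d; block_label hU in_blockA.
have dB : {in B, forall w, d w = Some 1%N} by rewrite /d; block_label hU in_blockB.
rewrite (util_profile b c (s := [:: x; y; a]) hd hP dA dB).
by rewrite /d !big_cons big_nil /= !F !eqxx /= !natrD; ring.
Qed.

Lemma util_leaf_cut x y a A B N : perm_eq (x :: y :: a :: A ++ B) (nodes N) ->
  util b c 0 (del_link (dstar x y (a :: A) B) a x) N a = 0.
Proof.
move=> hP; move: (enum_pad (s := [:: x; y; a]) 1 hP) => /= [hU hm].
have hlt v : v \in x :: y :: a :: A ++ B -> (v < N)%N by rewrite (perm_mem hP) mem_nodes.
have F := distinct_facts hU.
pose d w := if w == a then Some 0%N else None.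
have hd : bfs_labelling (del_link (dstar x y (a :: A) B) a x) N a d.
  by rewrite /d; bfs_check x y a N hU hm hlt.
have dA : {in A, forall w, d w = None} by rewrite /d; block_label hU in_blockA.
have dB : {in B, forall w, d w = None} by rewrite /d; block_label hU in_blockB.
rewrite (util_profile b c (s := [:: x; y; a]) hd hP dA dB).
by rewrite /d !big_cons big_nil /= !F !eqxx /=; ring.
Qed.

Lemma util_centre_leaf_cut x y a A B N : perm_eq (x :: y :: a :: A ++ B) (nodes N) ->
  util b c 0 (del_link (dstar x y (a :: A) B) a x) N x
  = (1 + size A)%:R * (b 1%N - c) + (size B)%:R * b 2%N.
Proof.
move=> hP; move: (enum_pad (s := [:: x; y; a]) 1 hP) => /= [hU hm].
have hlt v : v \in x :: y :: a :: A ++ B -> (v < N)%N by rewrite (perm_mem hP) mem_nodes.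
have F := distinct_facts hU.
pose d w := if w == x then Some 0%N else if w == y then Some 1%N
  else if w \in A then Some 1%N else if w \in B then Some 2%N else None.
have hd : bfs_labelling (del_link (dstar x y (a :: A) B) a x) N x d.
  by rewrite /d; bfs_check x y a N hU hm hlt.
have dA : {in A, forall w, d w = Some 1%N} by rewrite /d; block_label hU in_blockA.
have dB : {in B, forall w, d w = Some 2%N} by rewrite /d; block_label hU in_blockB.
rewrite (util_profile b c (s := [:: x; y; a]) hd hP dA dB).
by rewrite /d !big_cons big_nil /= !F !eqxx /=; ring.
Qed.

Lemma util_centre_cut x y A B N : perm_eq (x :: y :: A ++ B) (nodes N) ->
  util b c 0 (del_link (dstar x y A B) x y) N x = (size A)%:R * (b 1%N - c).
Proof.
move=> hP; move: (enum_pad (s := [:: x; y]) 2 hP) => /= [hU hm].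
have hlt v : v \in x :: y :: A ++ B -> (v < N)%N by rewrite (perm_mem hP) mem_nodes.
have F := distinct_facts hU.
pose d w := if w == x then Some 0%N else if w \in A then Some 1%N else None.
have hd : bfs_labelling (del_link (dstar x y A B) x y) N x d.
  by rewrite /d; bfs_check x y N N.+1 hU hm hlt.
have dA : {in A, forall w, d w = Some 1%N} by rewrite /d; block_label hU in_blockA.
have dB : {in B, forall w, d w = None} by rewrite /d; block_label hU in_blockB.
rewrite (util_profile b c (s := [:: x; y]) hd hP dA dB).
by rewrite /d !big_cons big_nil /= !F !eqxx /=; ring.
Qed.

Lemma util_newcomer_at_leaf x y a A B N : perm_eq (x :: y :: a :: A ++ B) (nodes N) ->
  util b c 0 (add_link (dstar x y (a :: A) B) N a) N.+1 N
  = (b 1%N - c) + b 2%N + (1 + size A)%:R * b 3%N + (size B)%:R * b 4%N.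
Proof.
move=> hP0; have hP := enum_newcomer (s := [:: x; y; a]) hP0.
move: (enum_pad (s := [:: x; y; a; N]) 0 hP) => /= [hU hm].
have hlt v : v \in x :: y :: a :: N :: A ++ B -> (v < N.+1)%N.
  by rewrite (perm_mem hP) mem_nodes.
have F := distinct_facts hU.
pose d w := if w == N then Some 0%N else if w == a then Some 1%N
  else if w == x then Some 2%N else if w == y then Some 3%N
  else if w \in A then Some 3%N else if w \in B then Some 4%N else None.
have hd : bfs_labelling (add_link (dstar x y (a :: A) B) N a) N.+1 N d.
  by rewrite /d; bfs_check x y a N hU hm hlt.
have dA : {in A, forall w, d w = Some 3%N} by rewrite /d; block_label hU in_blockA.
have dB : {in B, forall w, d w = Some 4%N} by rewrite /d; block_label hU in_blockB.
rewrite (util_profile b c (s := [:: x; y; a; N]) hd hP dA dB).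
by rewrite /d !big_cons big_nil /= !F !eqxx /= natrD; ring.
Qed.

End Utilities.

Lemma enum_swap x y A B N : perm_eq (x :: y :: A ++ B) (nodes N) ->
  perm_eq (y :: x :: B ++ A) (nodes N).
Proof.
apply: perm_trans; rewrite -[y :: _]cat1s -[x :: _]cat1s perm_catCA /=.
by rewrite !perm_cons perm_catC.
Qed.

Lemma enum_reorder x y A A' B B' N : perm_eq A A' -> perm_eq B B' ->
  perm_eq (x :: y :: A ++ B) (nodes N) ->
  perm_eq (x :: y :: A' ++ B') (nodes N) /\ dstar x y A B = dstar x y A' B'.
Proof.
move=> hA hB hP; split.
  by apply: perm_trans hP; rewrite !perm_cons perm_sym perm_cat.
by apply: dstar_eq_mem => v; rewrite ?(perm_mem hA) ?(perm_mem hB).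
Qed.

Lemma perm_two_leaves (a e : nat) (A : seq nat) : uniq A -> a \in A -> e \in A -> e != a ->
  perm_eq A (a :: e :: rem e (rem a A)).
Proof.
move=> hu ha he hea; apply: perm_trans (perm_to_rem ha) _; rewrite perm_cons.
by apply: perm_to_rem; rewrite (mem_rem_uniq _ hu) !inE hea he.
Qed.

Lemma enum_uniq_leaves x y A B N : perm_eq (x :: y :: A ++ B) (nodes N) -> uniq A /\ uniq B.
Proof.
by move/perm_uniq; rewrite iota_uniq /= cat_uniq => /and3P[_ _ /and3P[-> _ ->]].
Qed.

Section Stability.
Variables (R : realFieldType) (b : nat -> R) (c : R).
Hypotheses (h1pos : 0 < b 1%N - c) (h12 : b 1%N - c < b 2%N)
  (h13 : b 1%N - c <= b 3%N) (hb2 : 0 < b 2%N) (hb3 : 0 < b 3%N).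

Local Notation u := (util b c 0).

Definition link_kept (g : graph) N i j :=
  u (del_link g i j) N i <= u g N i /\ u (del_link g i j) N j <= u g N j.

Definition link_refused (g : graph) N i j :=
  u g N i < u (add_link g i j) N i -> u (add_link g i j) N j < u g N j.

Lemma link_kept_sym (g : graph) N i j : link_kept g N i j -> link_kept g N j i.
Proof. by rewrite /link_kept del_link_sym => -[]. Qed.

Ltac arith := have := h1pos; have := h12; have := h13; have := hb2; have := hb3; lra.

(* The centres keep their link: each would lose its access to the other side. *)
Lemma centres_link_kept x y A B N : perm_eq (x :: y :: A ++ B) (nodes N) ->
  link_kept (dstar x y A B) N x y.
Proof.
move=> hP; have hP' := enum_swap hP; split.
  rewrite util_centre_cut // (util_centre b c hP).1 natrD.
  have := mulr_ge0 (ler0n R (size B)) (ltW hb2); arith.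
rewrite del_link_sym dstar_swap util_centre_cut // (util_centre b c hP').1 natrD.
have := mulr_ge0 (ler0n R (size A)) (ltW hb2); arith.
Qed.

(* A leaf keeps its link: it would be isolated, and its centre loses it. *)
Lemma leaf_link_kept x y a A B N : perm_eq (x :: y :: A ++ B) (nodes N) -> a \in A ->
  link_kept (dstar x y A B) N a x.
Proof.
move=> hP ha; have [hP' ->] := enum_reorder (perm_to_rem ha) (perm_refl B) hP; split.
  rewrite util_leaf_cut // (util_leaf b c hP').1.
  have := mulr_ge0 (ler0n R (1 + size (rem a A))) (ltW hb2).
  have := mulr_ge0 (ler0n R (size B)) (ltW hb3); arith.
rewrite util_centre_leaf_cut // (util_centre b c (A := a :: rem a A) hP').1 /=.
rewrite -[(size (rem a A)).+1]add1n !natrD; arith.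
Qed.

(* A leaf never gains by linking to another leaf: the new neighbour was at
   distance 2 (resp. 3) already and the link costs [c]. *)
Lemma leaf_link_unprofitable x y a e A B N : perm_eq (x :: y :: A ++ B) (nodes N) ->
  a \in A -> e \in A ++ B -> e != a ->
  u (add_link (dstar x y A B) a e) N a <= u (dstar x y A B) N a.
Proof.
move=> hP ha; have [uA uB] := enum_uniq_leaves hP; rewrite mem_cat => /orP[] he hea.
  have [hP' ->] := enum_reorder (perm_two_leaves uA ha he hea) (perm_refl B) hP.
  rewrite util_leaf_link_sibling // (util_leaf b c (A := e :: _) hP').1 /=.
  rewrite -[(size _).+1]add1n !natrD; arith.
have [hP' ->] := enum_reorder (perm_to_rem ha) (perm_to_rem he) hP.
have hP'' : perm_eq (x :: y :: a :: e :: rem a A ++ rem e B) (nodes N).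
  by apply: perm_trans hP'; rewrite !perm_cons -cat1s perm_catCA.
rewrite util_leaf_link_across // (util_leaf b c (B := e :: _) hP').1 /=.
rewrite -[(size (rem e B)).+1]add1n !natrD; arith.
Qed.

(* The centre [y] strictly loses from a link to a leaf [a] of [x]: [a] moves
   from distance 2 to distance 1, which is worth [b_1 - c < b_2]. *)
Lemma far_centre_loses x y a A B N : perm_eq (x :: y :: A ++ B) (nodes N) -> a \in A ->
  u (add_link (dstar x y A B) a y) N y < u (dstar x y A B) N y.
Proof.
move=> hP ha; have [hP' ->] := enum_reorder (perm_to_rem ha) (perm_refl B) hP.
rewrite util_centre_link_leaf // dstar_swap (util_centre b c (enum_swap hP')).1 /=.
rewrite -[(size (rem a A)).+1]add1n !natrD; arith.
Qed.

Lemma dstar_nonlink x y A B N i j : perm_eq (x :: y :: A ++ B) (nodes N) ->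
  (i < N)%N -> (j < N)%N -> i != j -> ~~ dstar x y A B i j ->
  [|| (i \in A) && (j \in A ++ B), (i \in B) && (j \in B ++ A),
      (i \in A) && (j == y), (i \in B) && (j == x),
      (i == y) && (j \in A) | (i == x) && (j \in B)].
Proof.
move=> hP hi hj; move: (enum_pad (s := [:: x; y]) 2 hP) => /= [hU hm].
rewrite /dstar !mem_cat.
case: (node_classP hU (hm i hi)) => ei; case: (node_classP hU (hm j hj)) => ej;
  rewrite ?ei ?ej ?eqxx //=; move: hi hj; clear -ei ej; lia.
Qed.

Lemma dstar_pstable x y A B N : perm_eq (x :: y :: A ++ B) (nodes N) ->
  pstable b c 0 (dstar x y A B) N.
Proof.
move=> hP; have hP' := enum_swap hP.
have refused_leaf x' y' A' B' i j : perm_eq (x' :: y' :: A' ++ B') (nodes N) ->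
    i \in A' -> j \in A' ++ B' -> j != i -> link_refused (dstar x' y' A' B') N i j.
  by move=> hQ hi hj hji /lt_geF; rewrite leaf_link_unprofitable.
have refused_by_centre x' y' A' B' a : perm_eq (x' :: y' :: A' ++ B') (nodes N) ->
    a \in A' -> link_refused (dstar x' y' A' B') N a y' /\ link_refused (dstar x' y' A' B') N y' a.
  move=> hQ ha; split => [_|]; first exact: far_centre_loses.
  by rewrite /link_refused add_link_sym => /lt_geF; rewrite ltW // far_centre_loses.
split=> [i j hi hj|i j hi hj hij /(dstar_nonlink hP hi hj hij)].
  rewrite {1}/dstar => /or4P[/andP[/eqP-> /eqP->]|/andP[/eqP-> /eqP->]|/andP[/eqP-> ha]|].
  - exact: centres_link_kept.
  - by rewrite dstar_swap; apply: centres_link_kept.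
  - exact: link_kept_sym (leaf_link_kept hP ha).
  case/or3P=> [/andP[/eqP-> ha]|/andP[/eqP-> hb]|/andP[/eqP-> hb]].
  - exact: leaf_link_kept.
  - by rewrite dstar_swap; apply: link_kept_sym (leaf_link_kept hP' hb).
  - by rewrite dstar_swap; apply: leaf_link_kept.
case/or3P=> [/andP[hiA hj']|/andP[hiB hj']|].
- by apply: refused_leaf hP hiA hj' _; rewrite eq_sym.
- by rewrite dstar_swap; apply: refused_leaf hP' hiB hj' _; rewrite eq_sym.
case/or4P=> [/andP[ha /eqP->]|/andP[hb /eqP->]|/andP[/eqP-> ha]|/andP[/eqP-> hb]].
- exact: (refused_by_centre _ _ _ _ _ hP ha).1.
- by rewrite dstar_swap; exact: (refused_by_centre _ _ _ _ _ hP' hb).1.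
- exact: (refused_by_centre _ _ _ _ _ hP ha).2.
- by rewrite dstar_swap; exact: (refused_by_centre _ _ _ _ _ hP' hb).2.
Qed.

End Stability.

(* The invariant of the process: a double star whose centres have numbers of
   leaves differing by at most one. *)
Definition balanced_dstar (n : nat) (g : graph) : Prop :=
  exists x y (A B : seq nat), [/\ perm_eq (x :: y :: A ++ B) (nodes n), g = dstar x y A B,
    (size A <= (size B).+1)%N & (size B <= (size A).+1)%N].

Section Entry.
Variables (R : realFieldType) (b : nat -> R) (c c0 : R).

Local Notation E := (entry_util b c 0 c0).

(* Entry utility of a newcomer linking to the centre [y]: it becomes a leaf
   of [y] and pays [c0] per neighbour of [y]. *)
Lemma entry_at_centre x y A B N : perm_eq (x :: y :: A ++ B) (nodes N) ->
  E (dstar x y A B) N y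
  = (b 1%N - c) + (1 + size B)%:R * b 2%N + (size A)%:R * b 3%N - c0 * (1 + size B)%:R.
Proof.
move=> hP; have hP' := enum_swap hP.
have hPN := enum_newcomer (s := [:: y; x]) hP'.
rewrite /entry_util add_link_centre [dstar x y A (N :: B)]dstar_swap [dstar x y A B]dstar_swap.
by rewrite (util_leaf b c hPN).1 (util_centre b c hP').2.
Qed.

Lemma entry_at_leaf x y a A B N : perm_eq (x :: y :: A ++ B) (nodes N) -> a \in A ->
  E (dstar x y A B) N a
  = (b 1%N - c) + b 2%N + (size A)%:R * b 3%N + (size B)%:R * b 4%N - c0.
Proof.
move=> hP ha; have hsize := perm_size (perm_to_rem ha).
have [hP' ->] := enum_reorder (perm_to_rem ha) (perm_refl B) hP.
rewrite /entry_util util_newcomer_at_leaf // (util_leaf b c hP').2 hsize -add1n.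
by rewrite mulr1.
Qed.

Hypotheses (h1pos : 0 < b 1%N - c).

(* The centre [y] always accepts a newcomer: a new leaf is worth [b_1 - c > 0]. *)
Lemma centre_accepts x y A B N : perm_eq (x :: y :: A ++ B) (nodes N) ->
  accepts b c 0 (dstar x y A B) N y.
Proof.
move=> hP; have hP' := enum_swap hP.
have hPN : perm_eq (y :: x :: (N :: B) ++ A) (nodes N.+1).
  exact: (enum_newcomer (s := [:: y; x]) hP').
rewrite /accepts add_link_centre [dstar x y A (N :: B)]dstar_swap [dstar x y A B]dstar_swap.
rewrite (util_centre b c hP').1 (util_centre b c hPN).1 /= -[(size B).+1]add1n !natrD; have := h1pos; lra.
Qed.

Hypotheses (h34 : b 4%N <= b 3%N)
  (hc01 : b 2%N - b 3%N < c0) (hc02 : c0 < b 2%N - b 4%N).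

(* A newcomer choosing the best accepting node of a balanced double star whose
   centre [x] has at least as many leaves as [y] keeps it balanced: linking to
   [y] beats linking to [x] unless both have equally many leaves, and beats
   linking to any leaf unless the network is the 3-node path. *)
Lemma entry_keeps_balance x y A B N T : perm_eq (x :: y :: A ++ B) (nodes N) ->
  (size B <= size A)%N -> (size A <= (size B).+1)%N -> (T < N)%N ->
  E (dstar x y A B) N y <= E (dstar x y A B) N T ->
  balanced_dstar N.+1 (add_link (dstar x y A B) N T).
Proof.
move=> hP hBA hAB; rewrite -mem_nodes -(perm_mem hP) !in_cons mem_cat (entry_at_centre hP).
have gap2 : 0 < b 2%N - b 4%N - c0 by rewrite subr_gt0.
case/or4P=> [/eqP->|/eqP->|hTA|hTB].
- rewrite dstar_swap (entry_at_centre (enum_swap hP)).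
  case: (ltngtP (size A) (size B)) => [|hs|hs _]; first by rewrite ltnNge hBA.
    have -> : size A = (1 + size B)%N by lia.
    rewrite !natrD; have := hc01; lra.
  exists x, y, (N :: A), B; split; rewrite /= ?hs //.
  - exact: (enum_newcomer (s := [:: x; y]) hP).
  - by rewrite add_link_centre dstar_swap.
  - exact: leqW.
- move=> _; exists x, y, A, (N :: B); split; rewrite /= ?ltnS //.
  - exact: (enum_newcomer (s := [:: x, y & A]) hP).
  - exact: add_link_centre.
  - exact: leqW.
- rewrite (entry_at_leaf hP hTA) !natrD.
  case: (posnP (size B)) => [/size0nil eB|hB]; last first.
    have hB' : 0 < (size B)%:R :> R by rewrite ltr0n.
    have := mulr_gt0 hB' gap2; lra.
  move=> _; subst B; have eA : A = [:: T].
    by move: hTA hAB; clear; case: A => [|a [|a' A']] //=; rewrite inE => /eqP ->.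
  subst A; exists x, T, [:: y], [:: N]; split; rewrite ?add_link_path3 //.
  apply: perm_trans (enum_newcomer (s := [:: x; y; T]) hP).
  by rewrite perm_cons -[[:: T, y & _]]/([:: T] ++ [:: y] ++ [:: N]) perm_catCA.
- rewrite dstar_swap (entry_at_leaf (enum_swap hP) hTB) !natrD.
  have hB : 0 < (size B)%:R :> R by rewrite ltr0n; case: (B) hTB.
  have := mulr_gt0 hB gap2.
  have hBA' : 0 <= (size A)%:R - (size B)%:R :> R by rewrite subr_ge0 ler_nat.
  have h34' : 0 <= b 3%N - b 4%N by rewrite subr_ge0.
  have := mulr_ge0 hBA' h34'.
  lra.
Qed.

Lemma entry_balanced N g T : balanced_dstar N g -> (T < N)%N ->
  (forall T', (T' < N)%N -> accepts b c 0 g N T' -> E g N T' <= E g N T) ->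
  balanced_dstar N.+1 (add_link g N T).
Proof.
move=> [x [y [A [B [hP -> hAB hBA]]]]] hT best.
have hx : (x < N)%N by rewrite -mem_nodes -(perm_mem hP) mem_head.
have hy : (y < N)%N by rewrite -mem_nodes -(perm_mem hP) !inE eqxx orbT.
case: (leqP (size B) (size A)) => hs.
  exact: entry_keeps_balance hP hs hAB hT (best y hy (centre_accepts hP)).
rewrite dstar_swap in best *; have hP' := enum_swap hP.
exact: entry_keeps_balance hP' (ltnW hs) hBA hT (best x hx (centre_accepts hP')).
Qed.

End Entry.

Lemma count_mem_sub (A s : seq nat) : uniq A -> uniq s -> {subset A <= s} ->
  count (fun v => v \in A) s = size A.
Proof.
move=> uA us sub; rewrite -size_filter; apply/perm_size/uniq_perm; rewrite ?filter_uniq //.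
by move=> v; rewrite mem_filter; apply/andP/idP => [[]|h] //; split; rewrite ?sub.
Qed.

Lemma count_leaves x y A B N : perm_eq (x :: y :: A ++ B) (nodes N) ->
  count (fun v => [&& v != x, v != y & dstar x y A B x v]) (nodes N) = size A.
Proof.
move=> hP; move: (enum_pad (s := [:: x; y]) 2 hP) => /= [hU hm].
have F := distinct_facts hU; have [uA _] := enum_uniq_leaves hP.
rewrite -(count_mem_sub uA (iota_uniq 0 N)); last first.
  by move=> v hv; rewrite -(perm_mem hP) !inE mem_cat hv !orbT.
apply: eq_in_count => v; rewrite mem_nodes => /hm /(node_classP hU).
by rewrite /dstar eqxx ?F; case=> _.
Qed.

Lemma balanced_sizes_pos (p q : nat) : (4 <= 2 + p + q)%N ->
  (p <= q.+1)%N -> (q <= p.+1)%N -> (0 < p)%N /\ (0 < q)%N.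
Proof. lia. Qed.

Lemma balanced_dstar_2star n g : balanced_dstar n g -> (4 <= n)%N -> is_2star g n.
Proof.
move=> [x [y [A [B [hP -> hAB hBA]]]]] h4.
move: (enum_pad (s := [:: x; y]) 2 hP) => /= [hU hm]; have F := distinct_facts hU.
have hn : n = (2 + size A + size B)%N.
  by rewrite -[n](size_iota 0) -(perm_size hP) /= size_cat.
have hB := count_leaves (enum_swap hP); rewrite -dstar_swap in hB.
have hcount (v : nat) : [&& v != y, v != x & dstar x y A B y v] = [&& v != x, v != y & dstar x y A B y v].
  by case: (v != x); case: (v != y).
rewrite (eq_count hcount) in hB.
split => //; exists x, y; split.
- by rewrite -mem_nodes -(perm_mem hP) mem_head.
- by rewrite -mem_nodes -(perm_mem hP) !inE eqxx orbT.
- by rewrite F.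
- by rewrite /dstar !eqxx.
have [pA pB] : (0 < size A)%N /\ (0 < size B)%N.
  by apply: balanced_sizes_pos => //; rewrite -hn.
split; rewrite ?(count_leaves hP) ?hB //.
move=> v hv; move: (hm v hv) => /(node_classP hU); rewrite /dstar.
case=> ev //= _ _; rewrite ?F ?eqxx /=; try by move: hv; rewrite ev ltnNge ?leqnn ?leqnSn.
all: split=> // w _ hwx hwy; by rewrite (negbTE hwx) (negbTE hwy) ?andbF.
Qed.

Lemma balanced_dstar_path n g : balanced_dstar n g -> (n <= 3)%N -> is_path g n.
Proof.
move=> [x [y [A [B [hP -> hAB hBA]]]]] h3.
have hn : n = (2 + size A + size B)%N.
  by rewrite -[n](size_iota 0) -(perm_size hP) /= size_cat.
case: A hP hAB hBA hn => [|a [|a' A']] hP hAB hBA hn; last by rewrite hn /= in h3; lia.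
- case: B hP hAB hBA hn => [|e [|e' B']] hP hAB hBA hn; last by rewrite hn /= in h3; lia.
  + exists [:: x; y]; split => // v w _ _; rewrite /dstar /= !in_nil.
    rewrite ![x == _]eq_sym ![y == _]eq_sym.
    by case: (v == x); case: (v == y); case: (w == x); case: (w == y).
  + exists [:: x; y; e]; split => // v w _ _; rewrite /dstar /= !in_cons !in_nil.
    rewrite ![x == _]eq_sym ![y == _]eq_sym ![e == _]eq_sym.
    by case: (v == x); case: (v == y); case: (w == x); case: (w == y); case: (v == e); case: (w == e).
- case: B hP hAB hBA hn => [|e B'] hP hAB hBA hn; last by rewrite hn /= in h3; lia.
  exists [:: a; x; y]; split.
    by apply: perm_trans hP; rewrite -[[:: a; x; y]]/([:: a] ++ [:: x; y] ++ [::]) perm_catCA.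
  move=> v w _ _; rewrite /dstar /= !in_cons !in_nil.
  rewrite ![x == _]eq_sym ![y == _]eq_sym ![a == _]eq_sym.
  by case: (v == x); case: (v == y); case: (w == x); case: (w == y); case: (v == a); case: (w == a).
Qed.

Definition process_shape (n : nat) (g : graph) : Prop :=
  (n = 1%N /\ g = (fun _ _ => false)) \/ balanced_dstar n g.

Lemma second_entry : balanced_dstar 2 (add_link (fun _ _ => false) 1 0).
Proof.
exists 1%N, 0%N, [::], [::]; split => //.
apply: functional_extensionality => v; apply: functional_extensionality => w.
by rewrite /add_link /dstar !in_nil /= !andbF !orbF.
Qed.

Section Process.
Variables (R : realFieldType) (b : nat -> R) (c c0 : R).
Hypotheses (h1pos : 0 < b 1%N - c) (h12 : b 1%N - c < b 2%N) (h13 : b 1%N - c <= b 3%N)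
  (hb2 : 0 < b 2%N) (hb3 : 0 < b 3%N) (h34 : b 4%N <= b 3%N)
  (hc01 : b 2%N - b 3%N < c0) (hc02 : c0 < b 2%N - b 4%N).

Lemma process_shape_pstable n g : process_shape n g -> pstable b c 0 g n.
Proof.
case=> [[-> ->]|[x [y [A [B [hP -> _ _]]]]]]; last exact: dstar_pstable.
by split=> [i j|[|i] [|j]].
Qed.

(* Every reached network has a reachable shape; since these are pairwise
   stable, no node ever moves and only entries change the network. *)
Lemma reached_process_shape n g : reached b c 0 c0 n g -> process_shape n g.
Proof.
elim=> [|m g0 T _ IH _ hT _ _ best|m g0 g1 _ IH unstable _]; first by left.
  case: IH => [[em eg]|hbal]; right.
    subst m g0; have -> : T = 0%N by apply/eqP; rewrite -leqn0 -ltnS.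
    exact: second_entry.
  exact (entry_balanced h1pos h34 hc01 hc02 hbal hT best).
by case: unstable; apply: process_shape_pstable.
Qed.

End Process.

Unset Implicit Arguments.

Theorem corollary1 (R : realFieldType) (b : nat -> R) (c c0 : R)
  (hb_pos : forall i, (0 < i)%N -> 0 < b i)
  (hb_dec : forall i, (0 < i)%N -> b i.+1 < b i)
  (hc1 : b 1%N - b 3%N <= c) (hc2 : c < b 1%N)
  (hc01 : b 2%N - b 3%N < c0) (hc02 : c0 < b 2%N - b 4%N) :
  forall (n : nat) (g : graph),
    reached b c 0 c0 n g -> pstable b c 0 g n ->
    ((n <= 3)%N -> is_path g n) /\ ((4 <= n)%N -> is_2star g n).
Proof.
move=> n g hr _.
have h1pos : 0 < b 1%N - c by rewrite subr_gt0.
have h13 : b 1%N - c <= b 3%N by rewrite lerBlDr -lerBlDl.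
have h12 : b 1%N - c < b 2%N := le_lt_trans h13 (hb_dec 2%N isT).
have h34 : b 4%N <= b 3%N := ltW (hb_dec 3%N isT).
case: (reached_process_shape h1pos h12 h13 (hb_pos 2%N isT) (hb_pos 3%N isT) h34 hc01 hc02 hr).
  by move=> [-> ->]; split => // _; exists [:: 0%N].
by move=> hbal; split; [apply: balanced_dstar_path | apply: balanced_dstar_2star].
Qed.
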